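(* Let $\mathbb{I}=\{0,\dots,N-1\}$ with the linear adjacency ($i$ adjacent to $i+1$ for $0\le i\le N-2$), let $L$ be a finite totally ordered set and let $x:\mathbb{I}\to L$ be surjective. For $l\in L$, two connected components merge together at level $l$ in the sublevel set filtration (i.e. there exist two distinct connected components of $L_{<l}$ that are contained in the same connected component of $L_{<l}\cup L_l$) if and only if $l$ is the level of a local (flat) maximum $x[m],x[m+1],\dots,x[n]$ with $m\neq 0$ and $n\neq N-1$, i.e. there exist $1\le m\le n\le N-2$ with $x[m]=\dots=x[n]=l$, $x[m-1]<l$ and $x[n+1]<l$.
   Context: $L_l=\{i:x[i]=l\}$, $L_{<l}=\{i:x[i]<l\}$. A subset $S\subseteq\mathbb{I}$ is connected if it is nonempty and any two of its elements are joined by a chain of elements of $S$ with consecutive elements adjacent; connected components are maximal connected subsets. A local (flat) maximum at level $l$ is a maximal run of consecutive indices with value $l$ whose existing outer neighbours all have value strictly less than $l$. *)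

From mathcomp Require Import all_boot all_order.
Set Implicit Arguments. Unset Strict Implicit. Unset Printing Implicit Defensive.
Import Order.TTheory.
Local Open Scope order_scope.

Definition adj (N : nat) : rel 'I_N :=
  fun i j => ((nat_of_ord i).+1 == j) || ((nat_of_ord j).+1 == i).

Definition connected_set (N : nat) (S : {set 'I_N}) : Prop :=
  S != set0 /\
  forall a b, a \in S -> b \in S ->
    exists p : seq 'I_N, [/\ path (@adj N) a p, last a p = b & all (mem S) p].

Definition component (N : nat) (A C : {set 'I_N}) : Prop :=
  [/\ C \subset A, connected_set C &
      forall D : {set 'I_N}, C \subset D -> D \subset A -> connected_set D -> D = C].

Definition level_set (N : nat) (d : Order.disp_t) (L : orderType d)
  (x : 'I_N -> L) (l : L) : {set 'I_N} := [set i | x i == l].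
Definition sublevel_lt (N : nat) (d : Order.disp_t) (L : orderType d)
  (x : 'I_N -> L) (l : L) : {set 'I_N} := [set i | x i < l].

Definition merge_at (N : nat) (d : Order.disp_t) (L : orderType d)
  (x : 'I_N -> L) (l : L) : Prop :=
  exists C1 C2 D : {set 'I_N},
    [/\ component (sublevel_lt x l) C1, component (sublevel_lt x l) C2, C1 != C2,
        component (sublevel_lt x l :|: level_set x l) D &
        C1 \subset D /\ C2 \subset D].

From mathcomp Require Import all_boot all_order zify.
Import Order.TTheory.
Local Open Scope order_scope.
Set Implicit Arguments. Unset Strict Implicit.

(* For the path graph, connected sets are exactly the nonempty intervals, and
   the components of a set are its maximal runs.  Two runs of L_{<l} can only
   lie in one run of L_{<l} ∪ L_l if everything strictly between two
   consecutive points of L_{<l} separating them has value l: that block is an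
   interior flat maximum.  Conversely, the neighbours of an interior flat
   maximum lie in different runs of L_{<l}, joined through the block. *)

Section PathGraph.

Variable N : nat.
Implicit Types (A B C D S T : {set 'I_N}) (a b c i j k : 'I_N).

Definition convex S := forall i j k, i \in S -> j \in S -> (i <= k <= j)%N -> k \in S.

Definition segment i j : {set 'I_N} := [set k : 'I_N | (i <= k <= j)%N].

Lemma adj_path_mem_between a p c :
  path (@adj N) a p ->
  (a <= c <= last a p)%N || (last a p <= c <= a)%N -> c \in a :: p.
Proof.
elim: p a => [|y p IHp] a /=.
  by move=> _ between; rewrite inE; apply/eqP; apply: ord_inj; lia.
case/andP=> ay yp between; rewrite inE; case: eqVneq => //= ca.
apply: IHp => //.
have {}ca : nat_of_ord c != nat_of_ord a by [].
move: ay between ca; rewrite /adj; move: (last y p) => z; lia.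
Qed.

Lemma connected_convex S : connected_set S -> convex S.
Proof.
case=> _ Sconn a b c aS bS acb.
have [p [ap /esym pb pS]] := Sconn a b aS bS.
have := @adj_path_mem_between a p c ap; rewrite -pb acb => /(_ isT).
by rewrite inE => /predU1P[-> // | /(allP pS)].
Qed.

Lemma convex_connected S : S != set0 -> convex S -> connected_set S.
Proof.
move=> S0 Sconv; split=> // a b aS bS.
have [n] := ubnP (a - b + (b - a)); elim: n a aS => // n IHn a aS dist_ab.
have [ab | /eqP ab] := eqVneq (nat_of_ord a) b.
  by exists [::]; split=> //; apply: ord_inj.
have [step [step_adj step_between]] : exists step : 'I_N,
    adj a step /\ ((a < step <= b) || (b <= step < a))%N.
  have [a_lt_b | b_lt_a] : (a < b)%N \/ (b < a)%N by lia.
    have step_lt : (a.+1 < N)%N by have := ltn_ord b; lia.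
    by exists (Ordinal step_lt); rewrite /adj /= eqxx; split=> //; lia.
  have step_lt : (a.-1 < N)%N by have := ltn_ord a; lia.
  by exists (Ordinal step_lt); rewrite /adj /=; split; [apply/orP; right; apply/eqP | ]; lia.
have stepS : step \in S.
  by case/orP: step_between => between; [apply: (Sconv a b) | apply: (Sconv b a)] => //; lia.
have [p [stepp pb pS]] := IHn step stepS ltac:(lia).
by exists (step :: p); split; rewrite /= ?step_adj ?stepS.
Qed.

Lemma segment_connected i j : (i <= j)%N -> connected_set (segment i j).
Proof.
move=> ij; apply: convex_connected => [|a b c].
  by apply/set0Pn; exists i; rewrite inE leqnn.
rewrite !inE; lia.
Qed.

Lemma connectedU S T z : connected_set S -> connected_set T ->
  z \in S -> z \in T -> connected_set (S :|: T).
Proof.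
move=> /connected_convex Sconv /connected_convex Tconv zS zT.
apply: convex_connected => [|a b c]; first by apply/set0Pn; exists z; rewrite inE zS.
have [cz | zc] := leqP c z; rewrite !inE.
  by case/orP=> [aS | aT] _ acb; [rewrite (Sconv a z) // | rewrite (Tconv a z) ?orbT //]; lia.
by move=> _ /orP[bS | bT] acb; [rewrite (Sconv z b) // | rewrite (Tconv z b) ?orbT //]; lia.
Qed.

Lemma component_sub A C : component A C -> C \subset A.
Proof. by case. Qed.

Lemma component_connected A C : component A C -> connected_set C.
Proof. by case. Qed.

Lemma component_maximal A C T z : component A C -> connected_set T ->
  T \subset A -> z \in C -> z \in T -> T \subset C.
Proof.
case=> CA Cconn Cmax Tconn TA zC zT.
have <- := Cmax (C :|: T) (subsetUl C T) ltac:(by rewrite subUset CA TA)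
  (connectedU Cconn Tconn zC zT).
exact: subsetUr.
Qed.

Lemma component_eq A C1 C2 z : component A C1 -> component A C2 ->
  z \in C1 -> z \in C2 -> C1 = C2.
Proof.
move=> C1c C2c zC1 zC2; apply/eqP; rewrite eqEsubset.
rewrite (component_maximal C2c (component_connected C1c) (component_sub C1c) zC2 zC1).
by rewrite (component_maximal C1c (component_connected C2c) (component_sub C2c) zC1 zC2).
Qed.

Lemma component_mono A B C D z : A \subset B -> component A C -> component B D ->
  z \in C -> z \in D -> C \subset D.
Proof.
move=> AB Cc Dc zC zD.
exact: component_maximal Dc (component_connected Cc) (subset_trans (component_sub Cc) AB) zD zC.
Qed.

Definition run A i : {set 'I_N} :=
  [set j : 'I_N | [forall k : 'I_N, ((i <= k <= j)%N || (j <= k <= i)%N) ==> (k \in A)]].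

Lemma runP A i j k : j \in run A i -> (i <= k <= j)%N || (j <= k <= i)%N -> k \in A.
Proof. by rewrite inE => /forallP/(_ k)/implyP. Qed.

Lemma mem_run A i : i \in A -> i \in run A i.
Proof.
move=> iA; rewrite inE; apply/forallP => k; apply/implyP => ki.
by have -> : k = i by apply: ord_inj; lia.
Qed.

Lemma component_run A i : i \in A -> component A (run A i).
Proof.
move=> iA; have irun := mem_run iA.
have run_conn : connected_set (run A i).
  apply: convex_connected => [|a b c arun brun acb]; first by apply/set0Pn; exists i.
  rewrite inE; apply/forallP => k; apply/implyP => k_between.
  by have [ic | ci] := leqP i c; [apply: (runP brun) | apply: (runP arun)]; lia.
split=> // [|D runD DA Dconn].
  by apply/subsetP => j jrun; apply: (runP jrun); lia.
apply/eqP; rewrite eqEsubset runD andbT; apply/subsetP => j jD.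
have iD : i \in D by apply: (subsetP runD).
rewrite inE; apply/forallP => k; apply/implyP => /orP[] k_between; apply: (subsetP DA).
  exact: (connected_convex Dconn iD jD k_between).
exact: (connected_convex Dconn jD iD k_between).
Qed.

Lemma components_separated A C1 C2 a b :
  component A C1 -> component A C2 -> C1 != C2 -> a \in C1 -> b \in C2 ->
  (a <= b)%N -> exists2 c : 'I_N, (a <= c <= b)%N & c \notin A.
Proof.
move=> C1c C2c C12 aC1 bC2 ab.
apply/exists_inP; rewrite -negb_forall_in; apply: contra C12 => /forall_inP segA.
have segC1 : segment a b \subset C1.
  apply: (component_maximal C1c (segment_connected ab)) aC1 _.
    by apply/subsetP => k; rewrite inE => /segA.
  by rewrite inE leqnn ab.
have bC1 : b \in C1 by apply: (subsetP segC1); rewrite inE leqnn ab.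
by rewrite (component_eq C1c C2c bC1 bC2).
Qed.

Lemma gap_around A a b c : a \in A -> b \in A -> (a <= c <= b)%N -> c \notin A ->
  exists k1 k2 : 'I_N, [/\ k1 \in A /\ k2 \in A, (a <= k1 < c)%N /\ (c < k2 <= b)%N
    & forall i, (k1 < i < k2)%N -> i \notin A].
Proof.
move=> aA bA acb cA.
have ac : nat_of_ord a != c by apply: contraNneq cA => /ord_inj <-.
have cb : nat_of_ord c != b by apply: contraNneq cA => /ord_inj ->.
have below : (a < c)%N && (a \in A) by rewrite aA andbT; lia.
have above : (c < b)%N && (b \in A) by rewrite bA andbT; lia.
case: (@arg_maxnP _ a (fun k : 'I_N => (k < c)%N && (k \in A)) (@nat_of_ord N) below)
  => k1 /andP[k1c k1A] k1max.
case: (@arg_minnP _ b (fun k : 'I_N => (c < k)%N && (k \in A)) (@nat_of_ord N) above)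
  => k2 /andP[ck2 k2A] k2min.
exists k1, k2; split=> //.
  by have := k1max a below; have := k2min b above; lia.
move=> i k1ik2; apply: contraNN cA => iA.
have -> : c = i.
  by apply: ord_inj; move: (k1max i) (k2min i); rewrite iA !andbT /geq; lia.
exact: iA.
Qed.

End PathGraph.

Section SublevelMerging.

Variables (N : nat) (disp : Order.disp_t) (L : orderType disp).
Variables (x : 'I_N -> L) (l : L).

Definition interior_flat_max (m n : nat) : Prop :=
  [/\ (1 <= m)%N /\ (m <= n)%N /\ (n.+2 <= N)%N,
    (forall i : 'I_N, (m <= i <= n)%N -> x i = l),
    (forall i : 'I_N, nat_of_ord i = m.-1 -> x i < l) &
    (forall i : 'I_N, nat_of_ord i = n.+1 -> x i < l)].

Lemma merge_at_interior_flat_max : merge_at x l -> exists m n, interior_flat_max m n.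
Proof.
case=> C1 [C2 [D [C1c C2c C12 Dc [C1D C2D]]]].
have [a aC1] := set0Pn _ (proj1 (component_connected C1c)).
have [b bC2] := set0Pn _ (proj1 (component_connected C2c)).
wlog ab : a b C1 C2 C1c C2c C12 C1D C2D aC1 bC2 / (a < b)%N.
  move=> gen; have [ab | ba | eab] := ssrnat.ltngtP a b.
  - exact: (gen a b C1 C2).
  - by apply: (gen b a C2 C1); rewrite // eq_sym.
  - by move: C12; rewrite (component_eq C1c C2c aC1) ?(ord_inj eab) ?eqxx.
have aA := subsetP (component_sub C1c) a aC1.
have bA := subsetP (component_sub C2c) b bC2.
have [c acb cA] := components_separated C1c C2c C12 aC1 bC2 (ltnW ab).
have [k1 [k2 [[k1A k2A] [ak1c ck2b] gap]]] := gap_around aA bA acb cA.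
exists k1.+1, k2.-1; split.
- by have := ltn_ord k2; lia.
- move=> i k1ik2.
  have iD : i \in D.
    apply: (connected_convex (component_connected Dc)
      (subsetP C1D a aC1) (subsetP C2D b bC2)); lia.
  move: (subsetP (component_sub Dc) i iD) (gap i ltac:(lia)).
  by rewrite !inE => /orP[-> | /eqP].
- move=> i /= ik1; have -> : i = k1 by apply: ord_inj.
  by rewrite inE in k1A.
- move=> i ik2; have -> : i = k2 by apply: ord_inj; lia.
  by rewrite inE in k2A.
Qed.

Lemma interior_flat_max_merge_at m n : interior_flat_max m n -> merge_at x l.
Proof.
case=> -[m_ge1 [mn n_lt]] flat left right.
pose A := sublevel_lt x l; pose B := A :|: level_set x l.
have AB : A \subset B := subsetUl _ _.
have mk k : (k < N)%N -> exists i : 'I_N, nat_of_ord i = k.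
  by move=> k_lt; exists (Ordinal k_lt).
have [a aval] := mk m.-1 ltac:(lia).
have [b bval] := mk n.+1 ltac:(lia).
have [c cval] := mk m ltac:(lia).
have aA : a \in A by rewrite inE left.
have bA : b \in A by rewrite inE right.
have cA : c \notin A by rewrite inE flat ?ltxx //; lia.
have segB : segment a b \subset B.
  apply/subsetP => k; rewrite !inE => akb.
  have [/left -> // | ka] := eqVneq (nat_of_ord k) m.-1.
  have [/right -> // | kb] := eqVneq (nat_of_ord k) n.+1.
  by rewrite flat ?eqxx ?orbT //; lia.
have Dc := component_run (subsetP AB a aA).
have aD := mem_run (subsetP AB a aA).
have bD : b \in run B a.
  have segD : segment a b \subset run B a.
    by apply: (component_maximal Dc (segment_connected _) segB aD); rewrite ?inE; lia.
  by apply: (subsetP segD); rewrite inE; lia.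
exists (run A a), (run A b), (run B a).
split; [exact: component_run aA | exact: component_run bA | | exact: Dc |].
- apply: contraNneq cA => runAab; apply: (subsetP (component_sub (component_run aA))).
  have bC : b \in run A a by rewrite runAab mem_run.
  by apply: (connected_convex (component_connected (component_run aA)) (mem_run aA) bC); lia.
- split; first exact: component_mono AB (component_run aA) Dc (mem_run aA) aD.
  exact: component_mono AB (component_run bA) Dc (mem_run bA) bD.
Qed.

End SublevelMerging.

Unset Implicit Arguments. Set Strict Implicit.

Theorem mainTheorem5 (N : nat) (d : Order.disp_t) (L : finOrderType d)
  (x : 'I_N -> L) (Hsurj : forall l : L, exists i, x i = l) (l : L) :
  merge_at x l <->
  exists m n : nat, [/\ (1 <= m)%N /\ (m <= n)%N /\ (n.+2 <= N)%N,
    (forall i : 'I_N, (m <= i <= n)%N -> x i = l),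
    (forall i : 'I_N, nat_of_ord i = m.-1 -> x i < l) &
    (forall i : 'I_N, nat_of_ord i = n.+1 -> x i < l)].
Proof.
split; first exact: merge_at_interior_flat_max.
by case=> m [n]; apply: interior_flat_max_merge_at.
Qed.
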